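(* Let $D$ be a $3$-dicritical digraph and $uv$ an arc of $D$. Then $D$ admits a $uv$-colouring.
   Context: A $2$-dicolouring of a digraph is a map to $\{1,2\}$ such that each colour class induces an acyclic subdigraph (digons count as directed cycles). $D$ is $3$-dicritical if $D$ has no $2$-dicolouring but every proper subdigraph has one. For an arc $uv$ of $D$, a $uv$-colouring of $D$ is a map $\phi:V(D)\to\{1,2\}$ such that: $\phi$ is a $2$-dicolouring of $D\setminus uv$ (the digraph $D$ with the arc $uv$ deleted); $\phi(u)=\phi(v)=1$; and $D\setminus uv$ contains no directed path from $u$ to $v$ all of whose vertices have the same colour under $\phi$. *)

(* A digraph is a finite vertex type T with an arc relation
   A : rel T (no parallel arcs; loops excluded by hypothesis in the theorem;
   digons x->y->x allowed). *)
From mathcomp Require Import all_boot.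
Set Implicit Arguments. Unset Strict Implicit. Unset Printing Implicit Defensive.

(* X induces an acyclic subdigraph of (.., B): no directed cycle (closed
   directed walk with at least one arc) all of whose vertices lie in X. *)
Definition acyclic_in (T : finType) (B : rel T) (X : pred T) : Prop :=
  ~ exists (x : T) (p : seq T),
      [/\ p != [::], path B x p, last x p = x & all X (x :: p)].

Definition dicol2 (T : finType) (S : {set T}) (B : rel T) (phi : T -> nat) : Prop :=
  (forall x, x \in S -> phi x = 1 \/ phi x = 2) /\
  (forall c : nat, acyclic_in B [pred x | (x \in S) && (phi x == c)]).

Definition proper_subdigraph (T : finType) (A : rel T) (S : {set T}) (B : rel T) : Prop :=
  (forall x y, B x y -> [/\ A x y, x \in S & y \in S]) /\
  (S != [set: T] \/ exists x y, A x y /\ ~~ B x y).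

Definition dicritical3 (T : finType) (A : rel T) : Prop :=
  (~ exists phi, dicol2 [set: T] A phi) /\
  (forall S B, proper_subdigraph A S B -> exists phi, dicol2 S B phi).

Definition del_arc (T : finType) (A : rel T) (u v : T) : rel T :=
  fun x y => A x y && ~~ ((x == u) && (y == v)).

Definition uv_colouring (T : finType) (A : rel T) (u v : T) (phi : T -> nat) : Prop :=
  [/\ dicol2 [set: T] (del_arc A u v) phi, phi u = 1, phi v = 1 &
      ~ exists p : seq T,
          [/\ path (del_arc A u v) u p, last u p = v &
              all (fun x => phi x == phi u) (u :: p)]].

From mathcomp Require Import all_boot.

Set Implicit Arguments. Unset Strict Implicit. Unset Printing Implicit Defensive.

(* Criticality gives a 2-dicolouring phi of D \ uv, which cannot be a
   2-dicolouring of D.  A monochromatic cycle of D through uv can be rerouted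
   along any walk from u to v inside the colour class of u in D \ uv, giving a
   monochromatic closed walk of D \ uv.  So if phi u <> phi v (then uv lies in
   no colour class), or if D \ uv has a monochromatic u-v path, phi would
   2-dicolour D.  Hence phi u = phi v and there is no such path; exchanging the
   two colours if necessary makes phi u = 1. *)

Section Walks.
Variable T : finType.
Implicit Types (A B : rel T) (X Y : pred T).

Definition walk_in B X x y :=
  exists p, [/\ p != [::], path B x p, last x p = y & all X (x :: p)].

Lemma walk_in_arc B X x y : B x y -> X x -> X y -> walk_in B X x y.
Proof. by move=> Bxy Xx Xy; exists [:: y]; rewrite /= Bxy Xx Xy. Qed.

Lemma walk_in_trans B X x y z :
  walk_in B X x y -> walk_in B X y z -> walk_in B X x z.
Proof.
move=> [p [p0 Bp <- Xp]] [q [_ Bq <- /= /andP[_ Xq]]].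
exists (p ++ q); split.
- by case: p p0 {Bp Xp Bq}.
- by rewrite cat_path Bp Bq.
- by rewrite last_cat.
- by rewrite -cat_cons all_cat Xp.
Qed.

Lemma walk_in_lift A B X :
  (forall x y, A x y -> X x -> X y -> walk_in B X x y) ->
  forall x y, walk_in A X x y -> walk_in B X x y.
Proof.
move=> AB x y [p []]; elim: p x => // z p IH x _ /= /andP[Axz Ap] pz.
case/andP=> Xx /[dup] Xzp /andP[Xz _].
have Bxz := AB x z Axz Xx Xz.
case: p IH Ap pz Xzp => [|w p] IH Ap pz Xzp; first by rewrite -pz.
exact: walk_in_trans Bxz (IH z isT Ap pz Xzp).
Qed.

Lemma acyclic_in_lift A B X :
  (forall x y, A x y -> X x -> X y -> walk_in B X x y) ->
  acyclic_in B X -> acyclic_in A X.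
Proof. by move=> AB acycB [x /(walk_in_lift AB) Bxx]; apply: acycB; exists x. Qed.

Lemma acyclic_in_sub B X Y : {subset Y <= X} -> acyclic_in B X -> acyclic_in B Y.
Proof.
move=> YX acycX [x [p [p0 Bp px Yp]]]; apply: acycX.
by exists x, p; split=> //; apply: sub_all Yp.
Qed.

Lemma acyclic_in_del_arc A u v X :
  (X u -> X v -> walk_in (del_arc A u v) X u v) ->
  acyclic_in (del_arc A u v) X -> acyclic_in A X.
Proof.
move=> Wuv; apply: acyclic_in_lift => x y Axy Xx Xy.
case: (boolP ((x == u) && (y == v))) => [/andP[/eqP ex /eqP ey] | not_uv].
  by rewrite ex ey in Xx Xy *; apply: Wuv.
by apply: walk_in_arc; rewrite // /del_arc Axy not_uv.
Qed.

End Walks.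

Section Colourings.
Variable T : finType.
Implicit Types (A B : rel T) (S : {set T}) (phi : T -> nat).

Definition colour_class S phi c := [pred x | (x \in S) && (phi x == c)].

Definition swap_colours phi x := if phi x == 1 then 2 else 1.

Lemma eq_swap_colours S phi x y :
  (forall x, x \in S -> phi x = 1 \/ phi x = 2) -> x \in S -> y \in S ->
  (swap_colours phi x == swap_colours phi y) = (phi x == phi y).
Proof. by move=> phi12 /phi12[] phi_x /phi12[] phi_y; rewrite /swap_colours phi_x phi_y. Qed.

Lemma dicol2_swap_colours S B phi : dicol2 S B phi -> dicol2 S B (swap_colours phi).
Proof.
move=> [phi12 acyc]; split.
  by move=> x _; rewrite /swap_colours; case: (phi x == 1); [right | left].
move=> c; apply: acyclic_in_sub (acyc (3 - c)) => x /andP[Sx].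
by rewrite inE Sx /swap_colours; case: (phi12 x Sx) => -> /eqP <-.
Qed.

Lemma dicol2_del_arc S A u v phi :
  phi u != phi v \/ walk_in (del_arc A u v) (colour_class S phi (phi u)) u v ->
  dicol2 S (del_arc A u v) phi -> dicol2 S A phi.
Proof.
move=> Wuv [phi12 acyc]; split=> // c.
apply: acyclic_in_del_arc (acyc c) => /andP[_ /eqP phi_u] /andP[_ /eqP phi_v].
by case: Wuv; rewrite ?phi_u ?phi_v ?eqxx.
Qed.

Lemma proper_subdigraph_del_arc A u v :
  A u v -> proper_subdigraph A [set: T] (del_arc A u v).
Proof.
move=> Auv; split; first by move=> x y /andP[Axy _]; rewrite !in_setT.
by right; exists u, v; rewrite /del_arc !eqxx andbF.
Qed.

Definition mono_path A u v phi :=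
  exists p, [/\ path A u p, last u p = v & all (fun x => phi x == phi u) (u :: p)].

Lemma exists_uv_colouring A u v phi :
  dicol2 [set: T] (del_arc A u v) phi -> phi u = phi v ->
  ~ mono_path (del_arc A u v) u v phi -> exists psi, uv_colouring A u v psi.
Proof.
move=> phi_col phi_uv no_path.
have phi12 x : phi x = 1 \/ phi x = 2 := phi_col.1 x (in_setT x).
case: (phi12 u) => phi_u; first by exists phi; split; rewrite -?phi_uv.
exists (swap_colours phi); split.
- exact: dicol2_swap_colours.
- by rewrite /swap_colours phi_u.
- by rewrite /swap_colours -phi_uv phi_u.
- move=> [p [Bp pv Xp]]; apply: no_path; exists p; split=> //.
  apply: sub_all Xp => x /=.
  by rewrite (@eq_swap_colours [set: T]) ?in_setT // => y _; apply: phi12.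
Qed.

End Colourings.

Theorem lemma13 (T : finType) (A : rel T) (hloop : irreflexive A)
    (hD : dicritical3 A) (u v : T) (huv : A u v) :
  exists phi : T -> nat, uv_colouring A u v phi.
Proof.
have [phi phi_col] := hD.2 _ _ (proper_subdigraph_del_arc huv).
have not_col psi : ~ dicol2 [set: T] A psi by move=> psi_col; apply: hD.1; exists psi.
have u_neq_v : u != v by apply: contraTneq huv => ->; rewrite hloop.
have phi_uv : phi u = phi v.
  case: (eqVneq (phi u) (phi v)) => // neq; case: (not_col phi).
  exact: dicol2_del_arc (or_introl neq) phi_col.
apply: (exists_uv_colouring phi_col phi_uv) => - [p [Bp pv Xp]].
apply: (not_col phi); apply: dicol2_del_arc phi_col; right; exists p; split=> //.
- by case: p pv {Bp Xp} => // /eqP; rewrite (negbTE u_neq_v).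
- by apply: sub_all Xp => x; rewrite /= in_setT.
Qed.
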